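(* Consider the SWLME system $\partial_t U+\partial_x F(U)+B(U)\partial_x U=0$ in the conservative variables $U=(h,q,m_1,\dots,m_N)$ with $q=hu_m$, $m_i=h\alpha_i$, on the state space $h>0$, where $$F(U)=\Big(q,\ \frac{q^2}{h}+\frac g2h^2+\sum_{i=1}^N\frac{m_i^2}{(2i+1)h},\ \frac{2qm_1}{h},\dots,\frac{2qm_N}{h}\Big)^T,\quad B(U)=\mathrm{diag}(0,0,-u_m,\dots,-u_m),$$ and $g>0$. Let $A(U)=\frac{\partial F}{\partial U}(U)+B(U)$, with eigenvalues $\lambda_{1,2}=u_m\pm c$, $c=\sqrt{gh+\sum_{i=1}^N\frac{3\alpha_i^2}{2i+1}}$, and $\lambda_{i+2}=u_m$ ($i=1,\dots,N$). Then the characteristic fields associated with $\lambda_1$ and $\lambda_2$ are genuinely nonlinear, i.e. $\nabla_U\lambda_k(U)\cdot r_k(U)\neq 0$ for every $U$ with $h>0$ and every eigenvector $r_k$ of $A(U)$ for $\lambda_k$ ($k=1,2$), and the eigenvalue $u_m$ is linearly degenerate, i.e. $\nabla_U u_m\cdot r=0$ for every eigenvector $r$ of $A(U)$ associated with the eigenvalue $u_m$.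
   Context: SWLME = Shallow Water Linearized Moment Equations: $h$ water height, $u_m$ mean horizontal velocity, $\alpha_i$ coefficients of the vertical velocity profile expansion in Legendre-type basis functions, $g$ gravitational constant. Gradients are taken with respect to the conservative variables $(h,q,m_1,\dots,m_N)$, with $u_m=q/h$, $\alpha_i=m_i/h$. *)

From HB Require Import structures.
From mathcomp Require Import all_boot all_order all_algebra.
From mathcomp Require Import all_classical all_reals all_analysis.
Set Implicit Arguments. Unset Strict Implicit. Unset Printing Implicit Defensive.
Import Order.TTheory GRing.Theory Num.Theory.
Import numFieldNormedType.Exports.
Local Open Scope ring_scope.

Section SWLME.
Variables (R : realType) (N : nat) (g : R).

(* State vector U = (h, q, m_1, ..., m_N) as a column vector of size N+2. *)
Definition state := 'cV[R]_(N.+2).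

Definition hI : 'I_(N.+2) := ord0.
Definition qI : 'I_(N.+2) := lift ord0 ord0.
(* index of m_{i+1} for i : 'I_N (Rocq ordinals start at 0) *)
Definition mI (i : 'I_N) : 'I_(N.+2) := lift ord0 (lift ord0 i).

Definition hh (U : state) : R := U hI ord0.
Definition qq (U : state) : R := U qI ord0.
Definition mm (U : state) (i : 'I_N) : R := U (mI i) ord0.
Definition um (U : state) : R := qq U / hh U.
Definition alpha (U : state) (i : 'I_N) : R := mm U i / hh U.

(* flux F(U); component j >= 2 is 2 q m_{j-1} / h, with m_{j-1} = U j 0 *)
Definition flux (U : state) : state :=
  \col_j (if j == hI then qq U
          else if j == qI then
            qq U ^+ 2 / hh U + g / 2 * hh U ^+ 2
            + \sum_(i < N) mm U i ^+ 2 / ((2 * i.+1 + 1)%:R * hh U)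
          else 2 * qq U * U j ord0 / hh U).

Definition Bmat (U : state) : 'M[R]_(N.+2) :=
  \matrix_(i, j) (if (i == j) && (2 <= i)%N then - um U else 0).

Definition ebasis (k : 'I_(N.+2)) : state := delta_mx k ord0.

Definition jacF (U : state) : 'M[R]_(N.+2) :=
  \matrix_(i, j) derive (fun V : state => flux V i ord0) U (ebasis j).

Definition Amat (U : state) : 'M[R]_(N.+2) := jacF U + Bmat U.

Definition grad_dot (f : state -> R) (U r : state) : R :=
  \sum_(k < N.+2) derive f U (ebasis k) * r k ord0.

Definition is_eigenvector (M : 'M[R]_(N.+2)) (lam : R) (r : state) : Prop :=
  r != 0 /\ M *m r = lam *: r.

Definition sound_speed (U : state) : R :=
  Num.sqrt (g * hh U + \sum_(i < N) 3 * alpha U i ^+ 2 / (2 * i.+1 + 1)%:R).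

Definition lambda1 (U : state) : R := um U - sound_speed U.
Definition lambda2 (U : state) : R := um U + sound_speed U.

End SWLME.

From Pilot Require Import Defs.
From HB Require Import structures.
From mathcomp Require Import all_boot all_order all_algebra.
From mathcomp Require Import all_classical all_reals all_analysis.
From mathcomp Require Import ring lra.
Import Order.TTheory GRing.Theory Num.Theory.
Import numFieldNormedType.Exports.
Set Implicit Arguments. Unset Strict Implicit. Unset Printing Implicit Defensive.
Local Open Scope ring_scope.

(* The h-row
      gives r_q = lam r_h for every eigenpair; when lam != u_m the m_i-rows
      give r_{m_i} = 2 alpha_i r_h, hence r_h != 0.
   3. Characteristic speeds: writing lambda_{1,2} = u_m + s c (s = -1, 1),
      grad (u_m + s c) . r = s r_h (2c^2 + g h + T h) / (2 c h) with
      T = sum_i 6 alpha_i^2 / (h (2i+1)) >= 0, which is nonzero; and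
      grad u_m . r = (r_q - u_m r_h) / h = 0 along eigenvectors of u_m. *)

Section DirectionalDerivatives.
Variables (R : realType) (V : normedModType R).
Implicit Types (f g : V -> R) (x v : V).

(* The library's is_derive_cst is stated for [cst a]; this form unifies with
   constant factors written as lambda-terms. *)
Lemma is_derive_constf (a : R) x v : is_derive x v (fun=> a) 0.
Proof. exact: is_derive_cst. Qed.

(* Sum, product and inverse rules with the functions written pointwise, so that
   they apply directly to the expressions of Defs. *)
Lemma is_derive_addf f g x v df dg : is_derive x v f df -> is_derive x v g dg ->
  is_derive x v (fun y => f y + g y) (df + dg).
Proof. exact: is_deriveD. Qed.

Lemma is_derive_mulf f g x v df dg : is_derive x v f df -> is_derive x v g dg ->
  is_derive x v (fun y => f y * g y) (f x * dg + g x * df).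
Proof. exact: is_deriveM. Qed.

Lemma is_derive_invf f x v df : f x != 0 -> is_derive x v f df ->
  is_derive x v (fun y => (f y)^-1) (- df / f x ^+ 2).
Proof.
move=> fx0 [fxv dfE]; apply: DeriveDef; first exact: derivableV.
rewrite deriveV // dfE /=; change (- f x ^- 2 * df = - df / f x ^+ 2).
by rewrite mulNr mulrC mulNr.
Qed.

Lemma is_derive_sumf n (h : 'I_n -> V -> R) x v (dh : 'I_n -> R) :
  (forall i, is_derive x v (h i) (dh i)) ->
  is_derive x v (fun y => \sum_(i < n) h i y) (\sum_(i < n) dh i).
Proof. by move=> hx; rewrite -fct_sumE; exact: is_derive_sum. Qed.

(* A directional derivative of f at x along v is the derivative at 0 of the
   restriction t |-> f (t v + x); this reduces compositions to one variable. *)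
Lemma is_derive_restrict_line f x v df :
  is_derive x v f df <-> is_derive (0 : R) 1 (fun t : R => f (t *: v + x)) df.
Proof.
have line_quot : derive f x v = derive (fun t : R => f (t *: v + x)) 0 1.
  rewrite /derive; set qf := fun t => t^-1 *: _; set ql := fun t => t^-1 *: _.
  suff -> : qf = ql by [].
  by apply/funext => t; rewrite /qf /ql /= addr0 scale0r add0r [_%:A]mulr1.
split=> -[fxv dfE]; apply: DeriveDef.
- by move/derivable1P: fxv.
- by rewrite -line_quot.
- exact/derivable1P.
- by rewrite line_quot.
Qed.

Lemma is_derive_sqrtf f x v df : 0 < f x -> is_derive x v f df ->
  is_derive x v (fun y => Num.sqrt (f y)) (df / (2 * Num.sqrt (f x))).
Proof.
move=> fx_gt0 /is_derive_restrict_line fline; apply/is_derive_restrict_line.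
have dsqrt : is_derive (f (0 *: v + x)) 1 Num.sqrt (2 * Num.sqrt (f x))^-1.
  by rewrite scale0r add0r; exact: is_derive1_sqrt.
by rewrite mulrC; exact: is_derive1_comp dsqrt fline.
Qed.

End DirectionalDerivatives.

Lemma is_derive_entry (R : realType) m n (i : 'I_m) (j : 'I_n) (x v : 'M[R]_(m, n)) :
  is_derive x v (fun y : 'M[R]_(m, n) => y i j) (v i j).
Proof.
apply/is_derive_restrict_line.
have -> : (fun t : R => (t *: v + x) i j) = (fun t => t * v i j + x i j).
  by apply/funext => t; rewrite !mxE.
by apply: is_derive_eq; rewrite scaler0 add0r addr0 [_%:A]mulr1.
Qed.

Lemma sum_kronecker {R : pzRingType} {I : finType} (i : I) (w : I -> R) :
  \sum_j (j == i)%:R * w j = w i.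
Proof.
rewrite (bigD1 i) //= eqxx mul1r big1 ?addr0 // => j /negbTE ->.
by rewrite mul0r.
Qed.

Section Gradients.
Variables (R : realType) (N : nat).
Local Notation S := (state R N).
Local Notation hI := (hI N).
Local Notation qI := (qI N).

Definition lincomb (a b : R) (c : 'I_N -> R) (v : S) : R :=
  a * v hI ord0 + b * v qI ord0 + \sum_i c i * v (mI i) ord0.

Lemma state_index_cases (k : 'I_N.+2) : k = hI \/ k = qI \/ exists i, k = mI i.
Proof.
case: k => [[|[|k]] lt_k]; [left | right; left | right; right]; try exact: val_inj.
by exists (Ordinal (lt_k : (k < N)%N)); apply: val_inj.
Qed.

Lemma sum_ebasis (p : 'I_N.+2) (r : S) :
  \sum_k ebasis R k p ord0 * r k ord0 = r p ord0.
Proof.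
rewrite -(sum_kronecker p (fun k => r k ord0)); apply: eq_bigr => k _.
by rewrite /ebasis mxE andbT eq_sym.
Qed.

Lemma grad_dot_lincomb (f : S -> R) U a b c (r : S) :
  (forall v, is_derive U v f (lincomb a b c v)) ->
  grad_dot f U r = lincomb a b c r.
Proof.
move=> dfU; have dfE k : derive f U (ebasis R k) = lincomb a b c (ebasis R k).
  by case: (dfU (ebasis R k)).
rewrite /grad_dot; under eq_bigr => k _ do rewrite dfE /lincomb
  !mulrDl mulr_suml -!mulrA.
rewrite !big_split /= -!mulr_sumr !sum_ebasis exchange_big /=; congr (_ + _).
apply: eq_bigr => i _; under eq_bigr do rewrite -mulrA.
by rewrite -mulr_sumr sum_ebasis.
Qed.

End Gradients.

Section Eigenstructure.
Variables (R : realType) (N : nat) (g : R).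
Local Notation S := (state R N).
Local Notation hI := (hI N).
Local Notation qI := (qI N).

Lemma lincomb_comb x y a b c a' b' c' (v : S) :
  x * lincomb a b c v + y * lincomb a' b' c' v
  = lincomb (x * a + y * a') (x * b + y * b') (fun i => x * c i + y * c' i) v.
Proof.
rewrite /lincomb [in RHS](eq_bigr (fun i => x * (c i * v (mI i) ord0)
                             + y * (c' i * v (mI i) ord0))) => [|i _]; last ring.
by rewrite big_split -!mulr_sumr /=; ring.
Qed.

Lemma is_derive_um (U : S) : hh U != 0 -> forall v,
  is_derive U v (@um R N) (lincomb (- qq U / hh U ^+ 2) (hh U)^-1 (fun=> 0) v).
Proof.
move=> h_neq0 v; rewrite /um; apply: is_derive_eq.
  exact: is_derive_mulf (is_derive_entry qI ord0 U v)
                        (is_derive_invf h_neq0 (is_derive_entry hI ord0 U v)).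
rewrite /lincomb big1 => [|i _]; last by rewrite mul0r.
by rewrite /hh /qq; field.
Qed.

Lemma is_derive_flux_h (U : S) v :
  is_derive U v (fun V => flux g V hI ord0) (lincomb 0 1 (fun=> 0) v).
Proof.
rewrite /flux; under eq_fun do rewrite mxE /=.
apply: is_derive_eq; first exact: is_derive_entry qI ord0 U v.
by rewrite /lincomb big1 => [|i _]; [ring | rewrite mul0r].
Qed.

Lemma is_derive_flux_m (U : S) i : hh U != 0 -> forall v,
  is_derive U v (fun V => flux g V (mI i) ord0)
    (lincomb (- 2 * qq U * mm U i / hh U ^+ 2) (2 * mm U i / hh U)
             (fun j => (j == i)%:R * (2 * qq U / hh U)) v).
Proof.
move=> h_neq0 v; rewrite /flux; under eq_fun do rewrite mxE /=.
apply: is_derive_eq.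
  exact: is_derive_mulf (is_derive_mulf (is_derive_mulf (is_derive_constf 2 U v)
      (is_derive_entry qI ord0 U v)) (is_derive_entry (mI i) ord0 U v))
    (is_derive_invf h_neq0 (is_derive_entry hI ord0 U v)).
rewrite /lincomb; under [in RHS]eq_bigr do rewrite -mulrA.
by rewrite sum_kronecker /hh /qq /mm; field.
Qed.

Lemma Amat_row (U r : S) (k : 'I_N.+2) :
  (Amat g U *m r) k ord0
  = grad_dot (fun V => flux g V k ord0) U r + \sum_j Bmat U k j * r j ord0.
Proof.
rewrite mxE /grad_dot -big_split /=; apply: eq_bigr => j _.
by rewrite [Amat g U k j]mxE [jacF g U k j]mxE mulrDl.
Qed.

Lemma Bmat_row_h (U r : S) : \sum_j Bmat U hI j * r j ord0 = 0.
Proof. by apply: big1 => j _; rewrite mxE andbF mul0r. Qed.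

Lemma Bmat_row_m (U r : S) i :
  \sum_j Bmat U (mI i) j * r j ord0 = - um U * r (mI i) ord0.
Proof.
rewrite -(sum_kronecker (mI i) (fun j => - um U * r j ord0)).
by apply: eq_bigr => j _; rewrite mxE eq_sym; case: eqP => [->|]; rewrite ?mul0r ?mul1r.
Qed.

Lemma eigvec_q (U r : S) lam : is_eigenvector (Amat g U) lam r ->
  r qI ord0 = lam * r hI ord0.
Proof.
case=> _ /(congr1 (fun M : S => M hI ord0)).
rewrite Amat_row (grad_dot_lincomb _ (is_derive_flux_h U)) Bmat_row_h mxE /lincomb.
by rewrite big1 => [|i _]; [move=> <-; ring | rewrite mul0r].
Qed.

Lemma eigvec_m (U r : S) lam i : hh U != 0 -> lam != um U ->
  is_eigenvector (Amat g U) lam r -> r (mI i) ord0 = 2 * alpha U i * r hI ord0.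
Proof.
move=> h_neq0 lam_neq_um eig_r; have r_q := eigvec_q eig_r.
case: eig_r => _ /(congr1 (fun M : S => M (mI i) ord0)).
rewrite Amat_row (grad_dot_lincomb _ (is_derive_flux_m i h_neq0)) Bmat_row_m mxE.
rewrite /lincomb; under eq_bigr do rewrite -mulrA; rewrite sum_kronecker r_q.
move=> row_eq.
have : (lam - um U) * (r (mI i) ord0 - 2 * alpha U i * r hI ord0) = 0.
  rewrite -(subrr (lam * r (mI i) ord0)) -{2}row_eq /um /alpha /mm /qq /hh.
  by field.
by move/eqP; rewrite mulf_eq0 subr_eq0 (negbTE lam_neq_um) /= subr_eq0 => /eqP.
Qed.

(* Away from u_m, an eigenvector has nonzero h-component: r_q and every r_{m_i}
   are multiples of r_h, so r_h = 0 would force r = 0. *)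
Lemma eigvec_h_neq0 (U r : S) lam : hh U != 0 -> lam != um U ->
  is_eigenvector (Amat g U) lam r -> r hI ord0 != 0.
Proof.
move=> h_neq0 lam_neq_um eig_r; apply/eqP => r_h0.
have r_q := eigvec_q eig_r; have r_m i := eigvec_m i h_neq0 lam_neq_um eig_r.
case: eig_r => /eqP []; apply/matrixP => k j; rewrite (ord1 j) !mxE.
have [->|[->|[i ->]]] := state_index_cases k; by rewrite ?r_q ?r_m r_h0 ?mulr0.
Qed.

Definition sound_speed_sq (U : S) : R :=
  g * hh U + \sum_(i < N) 3 * alpha U i ^+ 2 / (2 * i.+1 + 1)%:R.

(* T = sum_i 6 alpha_i^2 / (h (2i+1)), so that d(c^2)/dh = g - T. *)
Definition moment_term (U : S) : R :=
  \sum_(i < N) 6 * alpha U i ^+ 2 / (hh U * (2 * i.+1 + 1)%:R).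

Lemma odd_weight_neq0 (i : 'I_N) : (2 * i.+1 + 1)%:R != 0 :> R.
Proof. by rewrite pnatr_eq0 addn1. Qed.

Lemma moment_term_ge0 (U : S) : 0 < hh U -> 0 <= moment_term U.
Proof.
move=> h_gt0; rewrite /moment_term; apply: sumr_ge0 => i _ /=.
apply: divr_ge0; first by rewrite mulr_ge0 ?sqr_ge0.
by rewrite mulr_ge0 ?ler0n // ltW.
Qed.

Lemma sound_speed_sq_gt0 (U : S) : 0 < g -> 0 < hh U -> 0 < sound_speed_sq U.
Proof.
move=> g_gt0 h_gt0; apply: ltr_wpDr; last exact: mulr_gt0.
apply: sumr_ge0 => i _; apply: divr_ge0; last exact: ler0n.
by rewrite mulr_ge0 ?sqr_ge0.
Qed.

Lemma sound_speed_gt0 (U : S) : 0 < g -> 0 < hh U -> 0 < sound_speed g U.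
Proof. by move=> g_gt0 h_gt0; rewrite sqrtr_gt0 sound_speed_sq_gt0. Qed.

Lemma is_derive_sound_speed_sq (U : S) : hh U != 0 -> forall v,
  is_derive U v sound_speed_sq
    (lincomb (g - moment_term U) 0
             (fun i => 6 * alpha U i / (hh U * (2 * i.+1 + 1)%:R)) v).
Proof.
move=> h_neq0 v.
have d_alpha i := is_derive_mulf (is_derive_entry (mI i) ord0 U v)
                    (is_derive_invf h_neq0 (is_derive_entry hI ord0 U v)).
have d_term i := is_derive_mulf (is_derive_mulf (is_derive_constf 3 U v)
  (is_derive_mulf (d_alpha i) (d_alpha i))) (is_derive_constf (2 * i.+1 + 1)%:R^-1 U v).
apply: is_derive_eq.
  exact: is_derive_addf (is_derive_mulf (is_derive_constf g U v)
    (is_derive_entry hI ord0 U v)) (is_derive_sumf d_term).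
rewrite /lincomb /moment_term mulr0 addr0 mul0r addr0 mulrBl mulr_suml.
rewrite -addrA -sumrN -big_split /=; congr (_ + _); apply: eq_bigr => i _.
move: (odd_weight_neq0 i) h_neq0; rewrite /alpha /mm /hh.
move: (_%:R) => k k_neq0 h_neq0; field.
by rewrite k_neq0 h_neq0.
Qed.

Definition char_speed (s : R) (U : S) : R := um U + s * sound_speed g U.

Lemma lambda1E : lambda1 g = char_speed (-1).
Proof. by apply/funext => U; rewrite /lambda1 /char_speed mulN1r. Qed.

Lemma lambda2E : lambda2 g = char_speed 1.
Proof. by apply/funext => U; rewrite /lambda2 /char_speed mul1r. Qed.

(* grad (u_m + s c) = grad u_m + s grad(c^2) / (2c). *)
Lemma is_derive_char_speed s (U : S) : 0 < g -> 0 < hh U -> forall v,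
  is_derive U v (char_speed s)
    (lincomb (- qq U / hh U ^+ 2 + s * (g - moment_term U) / (2 * sound_speed g U))
             (hh U)^-1
             (fun i => s * (6 * alpha U i / (hh U * (2 * i.+1 + 1)%:R))
                         / (2 * sound_speed g U)) v).
Proof.
move=> g_gt0 h_gt0 v; have h_neq0 : hh U != 0 by rewrite gt_eqF.
have d_c : is_derive U v (sound_speed g) _ :=
  is_derive_sqrtf (sound_speed_sq_gt0 g_gt0 h_gt0) (is_derive_sound_speed_sq h_neq0 v).
apply: is_derive_eq.
  exact: is_derive_addf (is_derive_um h_neq0 v) (is_derive_mulf (is_derive_constf s U v) d_c).
change (Num.sqrt (sound_speed_sq U)) with (sound_speed g U) => /=.
rewrite mulr0 addr0 -[lincomb _ _ (fun=> 0) v]mul1r.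
rewrite [s * _]mulrCA [_ * (s / _)]mulrC lincomb_comb.
by congr lincomb; [ring | ring | apply/funext => i; ring].
Qed.

Lemma grad_char_speed_acoustic s (U r : S) : 0 < g -> 0 < hh U ->
  r qI ord0 = char_speed s U * r hI ord0 ->
  (forall i, r (mI i) ord0 = 2 * alpha U i * r hI ord0) ->
  grad_dot (char_speed s) U r
  = s * r hI ord0 * ((2 * sound_speed g U ^+ 2 + g * hh U + moment_term U * hh U)
                     / (2 * sound_speed g U * hh U)).
Proof.
move=> g_gt0 h_gt0 r_q r_m.
have h_neq0 : hh U != 0 by rewrite gt_eqF.
have c_neq0 : sound_speed g U != 0 by rewrite gt_eqF ?sound_speed_gt0.
rewrite (grad_dot_lincomb _ (is_derive_char_speed s g_gt0 h_gt0)) /lincomb r_q.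
under eq_bigr do rewrite r_m.
set c := sound_speed g U.
have -> : \sum_(i < N) s * (6 * alpha U i / (hh U * (2 * i.+1 + 1)%:R)) / (2 * c)
            * (2 * alpha U i * r hI ord0)
          = s * (moment_term U * (r hI ord0 / c)).
  rewrite /moment_term mulr_suml mulr_sumr; apply: eq_bigr => i _.
  move: (odd_weight_neq0 i) => /=; move: (_%:R) => k k_neq0; field.
  by rewrite k_neq0 h_neq0 c_neq0.
by rewrite /char_speed /um -/c; field; rewrite c_neq0 h_neq0.
Qed.

Lemma char_speed_genuinely_nonlinear s (U r : S) : 0 < g -> 0 < hh U -> s != 0 ->
  is_eigenvector (Amat g U) (char_speed s U) r -> grad_dot (char_speed s) U r != 0.
Proof.
move=> g_gt0 h_gt0 s_neq0 eig_r.
have h_neq0 : hh U != 0 by rewrite gt_eqF.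
have c_gt0 := sound_speed_gt0 g_gt0 h_gt0.
have lam_neq_um : char_speed s U != um U.
  by rewrite /char_speed -subr_eq0 addrAC subrr add0r mulf_neq0 // gt_eqF.
rewrite (grad_char_speed_acoustic g_gt0 h_gt0 (eigvec_q eig_r)); last first.
  by move=> i; exact: eigvec_m h_neq0 lam_neq_um eig_r.
rewrite !mulf_neq0 ?(eigvec_h_neq0 h_neq0 lam_neq_um eig_r) // gt_eqF //.
  have := mulr_gt0 g_gt0 h_gt0; have := mulr_ge0 (moment_term_ge0 h_gt0) (ltW h_gt0).
  have := sqr_ge0 (sound_speed g U); lra.
by rewrite invr_gt0 !mulr_gt0.
Qed.

(* Linear degeneracy of the u_m field: along an eigenvector for u_m we have
   r_q = u_m r_h, and grad u_m . r = (r_q - u_m r_h) / h. *)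
Lemma um_linearly_degenerate (U r : S) : 0 < hh U ->
  is_eigenvector (Amat g U) (um U) r -> grad_dot (@um R N) U r = 0.
Proof.
move=> h_gt0 eig_r; have h_neq0 : hh U != 0 by rewrite gt_eqF.
rewrite (grad_dot_lincomb _ (is_derive_um h_neq0)) /lincomb (eigvec_q eig_r).
by rewrite big1 => [|i _]; [rewrite /um; field | rewrite mul0r].
Qed.

End Eigenstructure.

Theorem mainTheorem2 (R : realType) (N : nat) (g : R) (hg : 0 < g) :
  (forall (U : state R N), 0 < hh U ->
     (forall r, is_eigenvector (Amat g U) (lambda1 g U) r ->
                grad_dot (lambda1 g) U r != 0) /\
     (forall r, is_eigenvector (Amat g U) (lambda2 g U) r ->
                grad_dot (lambda2 g) U r != 0)) /\
  (forall (U : state R N), 0 < hh U ->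
     forall r, is_eigenvector (Amat g U) (um U) r ->
               grad_dot (@um R N) U r = 0).
Proof.
split=> [U h_gt0|U h_gt0 r]; last exact: um_linearly_degenerate.
rewrite lambda1E lambda2E; split=> r.
- by apply: char_speed_genuinely_nonlinear; rewrite ?oppr_eq0 ?oner_neq0.
- by apply: char_speed_genuinely_nonlinear; rewrite ?oner_neq0.
Qed.
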